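(* In the supersample setting described in the context, let $\ell$ be the zero-one loss and let $\mathcal A$ be an interpolating algorithm. Then \[ \frac{1}{n}\sum_{i=1}^nI(L^+_{i};U_i)\leq H\!\left(\frac{L_\mu}{2}\right). \]
   Context: Let $\mathcal Z=\mathcal X\times\mathcal Y$ and let $\mu$ be a distribution on $\mathcal Z$. A (possibly randomized) learning algorithm $\mathcal A$ maps a training sample in $\mathcal Z^n$ to a hypothesis $W\in\mathcal W$; each $w$ defines a predictor $f_w:\mathcal X\to\mathcal Y$, and the zero-one loss is $\ell(w,(x,y))=\mathbb 1\{f_w(x)\neq y\}$. For $S\sim\mu^n$ and $W\sim P_{W|S}$, $L_\mu=\mathbb E_W\mathbb E_{Z'\sim\mu}[\ell(W,Z')]$ with $Z'$ independent of $(S,W)$. Supersample: $\widetilde Z=(\widetilde Z_{i,j})_{i\in\{1,\dots,n\},j\in\{0,1\}}$ with i.i.d. entries of law $\mu$; $U=(U_1,\dots,U_n)$ uniform on $\{0,1\}^n$, independent of $\widetilde Z$; $W=\mathcal A(\widetilde Z_U)$ with $\widetilde Z_U=(\widetilde Z_{1,U_1},\dots,\widetilde Z_{n,U_n})$; $L_i^+=\ell(W,\widetilde Z_{i,0})$. The algorithm is interpolating if $\ell(W,\widetilde Z_{i,U_i})=0$ almost surely for every $i$. $H(p)=-p\ln p-(1-p)\ln(1-p)$ is the binary entropy function and mutual information is in nats. *)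

From HB Require Import structures.
From mathcomp Require Import all_boot all_order all_algebra.
From mathcomp Require Import all_classical all_reals all_analysis.
Set Implicit Arguments.
Unset Strict Implicit.
Unset Printing Implicit Defensive.
Import Order.TTheory GRing.Theory Num.Theory.
Local Open Scope classical_set_scope.
Local Open Scope ring_scope.

Definition loss01 (X Wt : Type) (Y : eqType) (f : Wt -> X -> Y) (w : Wt)
  (z : X * Y) : bool := f w z.1 != z.2.

(* the product sigma-algebra on ('I_n -> Z) * Xi is generated by the
   measurable cylinders {p | p.1 i \in B} and {p | p.2 \in D} *)
Definition sample_seed_cylinders (n : nat) (dZ dXi : measure_display)
  (Z : measurableType dZ) (Xi : measurableType dXi)
  : set (set (('I_n -> Z) * Xi)) :=
  [set E | exists i B, measurable B /\ E = [set p | B (p.1 i)]] `|`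
  [set E | exists D, measurable D /\ E = [set p | D p.2]].

Definition algo_measurable (n : nat) (dZ dXi dW : measure_display)
  (Z : measurableType dZ) (Xi : measurableType dXi) (Wt : measurableType dW)
  (A : ('I_n -> Z) -> Xi -> Wt) : Prop :=
  forall S : set Wt, measurable S ->
    <<s @sample_seed_cylinders n _ _ Z Xi >> [set p | S (A p.1 p.2)].

Section InfoDefs.
Variable R : realType.

Definition xlnx (x : R) : R := if x == 0 then 0 else x * ln x.

Definition binary_entropy (p : R) : R := - xlnx p - xlnx (1 - p).

Definition mutual_info_bool (d : measure_display) (Omega : measurableType d)
  (P : probability Omega R) (L V : Omega -> bool) : R :=
  \sum_(a : bool) \sum_(b : bool)
    (let pab := fine (P [set w | L w = a /\ V w = b]) in
     let pa := fine (P [set w | L w = a]) in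
     let pb := fine (P [set w | V w = b]) in
     if pab == 0 then 0 else pab * ln (pab / (pa * pb))).

(* uniform distribution on {0,1} (encoded as bool, false = 0, true = 1) *)
Definition unif_bool (B : set bool) : \bar R :=
  ((2^-1)%:E * (\d_false B + \d_true B))%E.

End InfoDefs.

(* Fix an index i and write L for the loss of W on the point Zt i false.
   If U i = 0, that point is in the training sample, so interpolation gives
   P(L = 1, U i = 0) = 0.  If U i = 1, it is unused: conditionally on the whole
   selection vector the supersample is i.i.d., hence (training sample, seed,
   Zt i false) restricted to U i = 1 has half the law of (training sample,
   seed) x mu, which gives P(L = 1, U i = 1) = Lmu / 2 (a pi-lambda argument
   extends this from rectangles to the event L = 1).  The joint law of (L, U i)
   is thus determined by q = Lmu / 2, and its mutual information
   q ln 2 + (1/2 - q) ln ((1 - 2q) / (1 - q)) - (1/2) ln (1 - q) is at most H(q). *)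

From HB Require Import structures.
From mathcomp Require Import all_boot all_order all_algebra.
From mathcomp Require Import all_classical all_reals all_analysis.
From mathcomp Require Import ring lra.
Set Implicit Arguments.
Unset Strict Implicit.
Unset Printing Implicit Defensive.
Import Order.TTheory GRing.Theory Num.Theory.
Local Open Scope classical_set_scope.
Local Open Scope ring_scope.

Lemma card_ffun_coord_true (I : finType) (i : I) :
  #|[pred u : {ffun I -> bool} | u i]|.*2 = #|{ffun I -> bool}|.
Proof.
pose flip (u : {ffun I -> bool}) := [ffun k => if k == i then ~~ u k else u k].
have flipK : involutive flip.
  by move=> u; apply/ffunP => k; rewrite !ffunE; case: eqP => // ->; rewrite negbK.
have card_flip : #|[pred u : {ffun I -> bool} | ~~ u i]| =
                  #|[pred u : {ffun I -> bool} | u i]|.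
  rewrite -(fintype.card_image (inv_inj flipK)); apply: eq_card => u.
  rewrite -{1}(flipK u) (fintype.mem_image (inv_inj flipK)) !inE.
  by rewrite ffunE eqxx negbK.
by rewrite -addnn -[RHS](cardC [pred u : {ffun I -> bool} | u i]) -card_flip.
Qed.

Lemma sum_ffun_coord_true (R : numFieldType) (I : finType) (i : I) (x : R) :
  \sum_(u : {ffun I -> bool} | u i) x = 2^-1 * \sum_(u : {ffun I -> bool}) x.
Proof.
rewrite !sumr_const -(card_ffun_coord_true i) -addnn mulrnDr.
by set y := x *+ _; field.
Qed.

Lemma sum_ffun_bool_weight (R : numFieldType) (I : finType) (c : R) :
  \sum_(u : {ffun I -> bool}) 2 ^- #|I| * c = c.
Proof.
rewrite sumr_const card_ffun card_bool -[_ *+ _]mulr_natl natrX mulrA.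
by rewrite mulfV ?mul1r // expf_neq0 // pnatr_eq0.
Qed.

Lemma preimage_g_sigma (T1 T2 : Type) (g : T1 -> T2) (H : set (set T1))
    (G : set (set T2)) :
  sigma_algebra setT H -> (forall M, G M -> H (g @^-1` M)) ->
  forall M, <<s G >> M -> H (g @^-1` M).
Proof.
move=> sH gGH M GM; rewrite -[g @^-1` M]setTI.
apply: (smallest_sub (sigma_algebra_image g sH) _ GM) => B /gGH.
by rewrite /image_set_system /= setTI.
Qed.

Section finite_partition.
Context d (T : measurableType d) (R : realType) (mu : {measure set T -> \bar R}).

Lemma measurable_forall (I : finType) (Q : I -> set T) :
  (forall k, measurable (Q k)) -> measurable [set w | forall k, Q k w].
Proof.
move=> mQ; rewrite (_ : [set w | _] = \bigcap_(k in [set: I]) Q k).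
  exact: fin_bigcap_measurable finite_finset _.
by apply/seteqP; split=> w wQ k //; exact: wQ.
Qed.

Lemma bigcup_fibers (I : Type) (g : T -> I) (E : set T) :
  E = \bigcup_(k in [set: I]) (E `&` g @^-1` [set k]).
Proof. by apply/seteqP; split=> [w Ew|w [k _ []//]]; exists (g w). Qed.

Lemma measure_fiber_sum (I : finType) (g : T -> I) (E : set T) :
  measurable E -> (forall k, measurable (g @^-1` [set k])) ->
  mu E = (\sum_(k : I) mu (E `&` g @^-1` [set k]))%E.
Proof.
move=> mE mg; rewrite {1}(bigcup_fibers g E) measure_fin_bigcup //.
- rewrite (fsbigE (index_enum I)) ?index_enum_uniq //.
    by apply: eq_bigl => k; rewrite in_setT.
  by move=> k _; rewrite mem_index_enum.
- exact: finite_finset.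
- by move=> k l _ _ [w [[_ <-] [_ <-]]].
- by move=> k _; exact: measurableI.
Qed.

End finite_partition.

Section binary_mutual_info.
Variable R : realType.

Definition mutual_info_term (pab pa pb : R) : R :=
  if pab == 0 then 0 else pab * ln (pab / (pa * pb)).

Lemma mutual_info_term0 (pa pb : R) : mutual_info_term 0 pa pb = 0.
Proof. by rewrite /mutual_info_term eqxx. Qed.

Lemma mutual_info_term_le0 (pab pa pb : R) :
  0 <= pab <= pa * pb -> mutual_info_term pab pa pb <= 0.
Proof.
rewrite /mutual_info_term => /andP[pab_ge0 pab_le]; case: eqP => // pab_neq0.
have pab_gt0 : 0 < pab by rewrite lt_def pab_ge0 andbT; apply/eqP.
apply: mulr_ge0_le0 => //; apply: ln_le0.
by rewrite ler_pdivrMr ?mul1r // (lt_le_trans pab_gt0).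
Qed.

Lemma xlnxE (x : R) : xlnx x = x * ln x.
Proof. by rewrite /xlnx; case: eqP => [->|]; rewrite ?mul0r. Qed.

Lemma mutual_info_terms_le_binary_entropy (q : R) : 0 <= q <= 2^-1 ->
  mutual_info_term q q 2^-1 + mutual_info_term 0 q 2^-1 +
  (mutual_info_term (2^-1 - q) (1 - q) 2^-1 + mutual_info_term 2^-1 (1 - q) 2^-1)
  <= binary_entropy q.
Proof.
move=> /andP[q_ge0 q_le].
have q1_gt0 : 0 < 1 - q by lra.
have test_term : mutual_info_term q q 2^-1 = q * ln 2.
  rewrite /mutual_info_term; case: eqP => [->|q_neq0]; first by rewrite mul0r.
  by congr (_ * ln _); field; apply/eqP.
have train_term : mutual_info_term 2^-1 (1 - q) 2^-1 = - (2^-1 * ln (1 - q)).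
  rewrite /mutual_info_term; case: eqP => [|_]; first lra.
  have -> : 2^-1 / ((1 - q) * 2^-1) = (1 - q)^-1 :> R by field; apply/eqP; lra.
  by rewrite lnV ?posrE // mulrN.
have cross_term : mutual_info_term (2^-1 - q) (1 - q) 2^-1 <= 0.
  by apply: mutual_info_term_le0; apply/andP; split; lra.
rewrite mutual_info_term0 test_term train_term /binary_entropy !xlnxE addr0.
have ln1q : ln (1 - q) <= 0 by apply: ln_le0; lra.
have ln2q : q * (ln 2 + ln q) <= 0.
  have [->|q_gt0] := eqVneq q 0; first by rewrite mul0r.
  rewrite -lnM ?posrE ?ltr0n //; last by rewrite lt_def q_gt0.
  by apply: mulr_ge0_le0 => //; apply: ln_le0; lra.
(* [binary_entropy q] minus the two nonzero terms is
   [- q ln (2 q) - (1/2 - q) ln (1 - q)]. *)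
have : 0 <= (2^-1 - q) * - ln (1 - q) by apply: mulr_ge0; lra.
lra.
Qed.

Section bool_random_variables.
Context d (Omega : measurableType d) (P : probability Omega R).

Let pr (A : set Omega) : R := fine (P A).

Lemma probability_setD (A B : set Omega) : measurable A -> measurable B ->
  P (A `\` B) = (P A - P (A `&` B))%E.
Proof. by move=> mA mB; rewrite measureD // ltey_eq fin_num_measure. Qed.

Lemma mutual_info_boolE (L V : Omega -> bool) :
  mutual_info_bool P L V = \sum_(a : bool) \sum_(b : bool)
    mutual_info_term (pr ([set w | L w = a] `&` [set w | V w = b]))
      (pr [set w | L w = a]) (pr [set w | V w = b]).
Proof. by []. Qed.

Lemma probability_fineC (A : set Omega) : measurable A -> pr (~` A) = 1 - pr A.
Proof. by move=> mA; rewrite /pr probability_setC // fineB // fin_num_measure. Qed.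

Lemma probability_fine_split (A B : set Omega) : measurable A -> measurable B ->
  pr A = pr (A `&` B) + pr (A `&` ~` B).
Proof.
move=> mA mB; rewrite /pr (measureDI P mA mB) setDE addrC fineD //;
  by rewrite fin_num_measure //; apply: measurableI => //; exact: measurableC.
Qed.

Lemma mutual_info_bool_le_binary_entropy (L V : Omega -> bool) (q : R) :
  measurable [set w | L w] -> measurable [set w | V w] ->
  P [set w | V w] = (2^-1)%:E ->
  P [set w | L w /\ V w] = q%:E ->
  P [set w | L w /\ ~ V w] = 0%E ->
  mutual_info_bool P L V <= binary_entropy q.
Proof.
move=> mL mV PV PLV PLnV.
have setF (F : Omega -> bool) : [set w | F w = false] = ~` [set w | F w].
  by apply/seteqP; split=> w /=; case: (F w).
rewrite mutual_info_boolE !big_bool /= !setF.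
set EL := [set w | L w = true]; set EV := [set w | V w = true].
have mLc : measurable (~` EL) by exact: measurableC.
have mVc : measurable (~` EV) by exact: measurableC.
have pLV : pr (EL `&` EV) = q by rewrite /pr [P _]PLV.
have pLnV : pr (EL `&` ~` EV) = 0 by rewrite /pr [P _]PLnV.
have pV : pr EV = 2^-1 by rewrite /pr [P _]PV.
have pVc : pr (~` EV) = 2^-1 by rewrite probability_fineC // pV; lra.
have pL : pr EL = q by rewrite (probability_fine_split mL mV) pLV pLnV addr0.
have pLc : pr (~` EL) = 1 - q by rewrite probability_fineC // pL.
have pLcV : pr (~` EL `&` EV) = 2^-1 - q.
  rewrite setIC -pV (probability_fine_split mV mL) [EV `&` EL]setIC pLV.
  by rewrite addrC addKr.
have pLcVc : pr (~` EL `&` ~` EV) = 2^-1.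
  rewrite setIC -pVc (probability_fine_split mVc mL) [~` EV `&` EL]setIC.
  by rewrite pLnV add0r.
have q_ge0 : 0 <= q by rewrite -pL fine_ge0.
have q_le : q <= 2^-1 by rewrite -subr_ge0 -pLcV fine_ge0.
rewrite pLV pLnV pL pLc pV pVc pLcV pLcVc.
by apply: mutual_info_terms_le_binary_entropy; rewrite q_ge0 q_le.
Qed.

End bool_random_variables.
End binary_mutual_info.

Lemma unif_bool1 (R : realType) (b : bool) : unif_bool R [set b] = (2^-1)%:E.
Proof.
rewrite /unif_bool !diracE -EFinD -EFinM.
by case: b; rewrite !in_set1 /= ?addr0 ?add0r mulr1.
Qed.

Section supersample.
Variables (R : realType) (dO : measure_display) (Omega : measurableType dO)
  (P : probability Omega R) (dX dY dW dXi : measure_display)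
  (X : measurableType dX) (Y : measurableType dY)
  (Wt : measurableType dW) (Xi : measurableType dXi)
  (mu : probability (X * Y)%type R) (f : Wt -> X -> Y) (n : nat)
  (A : ('I_n -> (X * Y)%type) -> Xi -> Wt)
  (Zt : 'I_n -> bool -> {RV P >-> (X * Y)%type}) (U : 'I_n -> {RV P >-> bool})
  (xi : {RV P >-> Xi}) (W : {RV P >-> Wt}).

Let Z := (X * Y)%type.

Hypothesis supersample_law :
  forall (B : 'I_n -> bool -> set Z) (C : 'I_n -> set bool) (D : set Xi),
    (forall i j, measurable (B i j)) -> (forall i, measurable (C i)) ->
    measurable D ->
    P [set w | (forall i j, B i j (Zt i j w)) /\ (forall i, C i (U i w))
               /\ D (xi w)]
    = ((\prod_(i < n) \prod_(j : bool) mu (B i j))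
       * (\prod_(i < n) unif_bool R (C i)) * P (xi @^-1` D))%E.

Definition selection (w : Omega) : {ffun 'I_n -> bool} := [ffun k => U k w].

Lemma measurable_selection_fiber (u : {ffun 'I_n -> bool}) :
  measurable (selection @^-1` [set u]).
Proof.
rewrite (_ : _ @^-1` _ = [set w | forall k, U k w = u k]).
  apply: measurable_forall => k.
  exact: (measurable_funPTI (U k) (Y := [set u k])).
apply/seteqP; split=> w /= => [<- k|wu]; first by rewrite ffunE.
by apply/ffunP => k; rewrite ffunE.
Qed.

Definition train_test_event (Btrain Btest : 'I_n -> set Z) (D : set Xi) :=
  [set w | (forall k, Btrain k (Zt k (U k w) w) /\ Btest k (Zt k (~~ U k w) w))
           /\ D (xi w)].

Definition train_test_weight (Btrain Btest : 'I_n -> set Z) (D : set Xi) : R :=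
  (\prod_(k < n) (fine (mu (Btrain k)) * fine (mu (Btest k))))
  * fine (P (xi @^-1` D)).

Section fixed_sets.
Variables (Btrain Btest : 'I_n -> set Z) (D : set Xi).
Hypotheses (mBtrain : forall k, measurable (Btrain k))
  (mBtest : forall k, measurable (Btest k)) (mD : measurable D).

Let E := train_test_event Btrain Btest D.

Let fiber_sets (u : {ffun 'I_n -> bool}) k j :=
  if j == u k then Btrain k else Btest k.

(* On the fiber [selection = u] the event only constrains the independent
   points [Zt k j], the selection and the seed. *)
Lemma train_test_fiberE (u : {ffun 'I_n -> bool}) :
  E `&` selection @^-1` [set u] =
  [set w | (forall k j, fiber_sets u k j (Zt k j w))
           /\ (forall k, [set u k] (U k w)) /\ D (xi w)].
Proof.
apply/seteqP; split=> w /=.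
  move=> [[wB wD] /ffunP wu]; have {}wu k : U k w = u k by rewrite -wu ffunE.
  split=> [k j|]; last by split.
  rewrite /fiber_sets -!wu; case: (wB k).
  by case: eqP => [->|/eqP]; case: j; case: (U k w).
move=> [wB [wu wD]]; split; last by apply/ffunP => k; rewrite ffunE wu.
split=> // k; have := wB k (U k w); have := wB k (~~ U k w).
by rewrite /fiber_sets wu eqxx; case: (u k).
Qed.

Lemma measurable_train_test_event : measurable E.
Proof.
rewrite (bigcup_fibers selection E); apply: fin_bigcup_measurable => [|u _].
  exact: finite_finset.
rewrite train_test_fiberE; apply: measurableI; [|apply: measurableI].
- apply: measurable_forall => k; apply: measurable_forall => j.
  by apply: measurable_funPTI; rewrite /fiber_sets; case: eqP.
- by apply: measurable_forall => k; exact: measurable_funPTI.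
- exact: measurable_funPTI.
Qed.

Lemma prob_train_test_fiber (u : {ffun 'I_n -> bool}) :
  P (E `&` selection @^-1` [set u]) =
  (2 ^- n * train_test_weight Btrain Btest D)%:E.
Proof.
rewrite train_test_fiberE.
rewrite (@supersample_law (fiber_sets u) (fun k => [set u k]) D) //; last first.
  by move=> k j; rewrite /fiber_sets; case: eqP.
have fiber_prod k : (\prod_(j : bool) mu (fiber_sets u k j)
    = (fine (mu (Btrain k)) * fine (mu (Btest k)))%:E)%E.
  rewrite big_bool /fiber_sets EFinM !fineK ?fin_num_measure //.
  by case: (u k) => //=; exact: muleC.
rewrite (eq_bigr _ (fun k _ => fiber_prod k)).
rewrite (eq_bigr _ (fun k _ => unif_bool1 R (u k))).
rewrite -(fineK (fin_num_measure P _ (measurable_funPTI xi mD))).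
rewrite !prodEFin -!EFinM.
by rewrite prodr_const card_ord exprVn /train_test_weight; congr EFin; ring.
Qed.

Lemma prob_train_test_event : P E = (train_test_weight Btrain Btest D)%:E.
Proof.
rewrite (measure_fiber_sum P measurable_train_test_event
  measurable_selection_fiber).
rewrite (eq_bigr _ (fun u _ => prob_train_test_fiber u)) sumEFin.
by rewrite -[in 2 ^- n](card_ord n) sum_ffun_bool_weight.
Qed.

Lemma prob_train_test_event_selected (i : 'I_n) :
  P (E `&` [set w | U i w]) = (2^-1 * train_test_weight Btrain Btest D)%:E.
Proof.
have mEi : measurable (E `&` [set w | U i w]).
  apply: measurableI; first exact: measurable_train_test_event.
  exact: measurable_funPTI.
rewrite (measure_fiber_sum P mEi measurable_selection_fiber).
have fiberE u : E `&` [set w | U i w] `&` selection @^-1` [set u] =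
    if u i then E `&` selection @^-1` [set u] else set0.
  apply/seteqP; split=> w /=.
    by move=> [[Ew Uw] <-]; rewrite /selection ffunE Uw.
  case: ifP => // ui [Ew wu]; do !split => //.
  by move: ui; rewrite -wu /selection ffunE.
pose c := 2 ^- n * train_test_weight Btrain Btest D.
rewrite (eq_bigr (fun u : {ffun _} => if u i then c%:E else 0%E)); last first.
  move=> u _; rewrite fiberE; case: (u i); last exact: measure0.
  exact: prob_train_test_fiber.
rewrite -big_mkcond sumEFin sum_ffun_coord_true.
by rewrite /c -[in 2 ^- n](card_ord n) sum_ffun_bool_weight.
Qed.

End fixed_sets.

Lemma measurable_fun_selected_sample (k : 'I_n) :
  measurable_fun setT (fun w => Zt k (U k w) w).
Proof.
move=> _ B mB; rewrite setTI.
have -> : (fun w => Zt k (U k w) w) @^-1` B =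
    ([set w | U k w] `&` Zt k true @^-1` B) `|`
    ([set w | U k w = false] `&` Zt k false @^-1` B).
  apply/seteqP; split=> w /=; first by case: (U k w) => Bw; [left|right].
  by case=> -[Uw Bw]; rewrite Uw.
apply: measurableU; apply: measurableI; try exact: measurable_funPTI.
exact: (measurable_funPTI (U k) (Y := [set false])).
Qed.

Definition sample_seed (w : Omega) : ('I_n -> Z) * Xi :=
  (fun k => Zt k (U k w) w, xi w).

Let S := ((('I_n -> Z) * Xi) * Z)%type.

Definition rectangle (B : 'I_n -> set Z) (D : set Xi) (B' : set Z) : set S :=
  [set p | (forall k, B k (p.1.1 k)) /\ D p.1.2 /\ B' p.2].

Definition rectangles : set (set S) :=
  [set E | exists B D B', [/\ forall k, measurable (B k), measurable D,
                             measurable B' & E = rectangle B D B']].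

Lemma rectangles_setT : rectangles setT.
Proof.
exists (fun=> setT), setT, setT; split => //.
by apply/seteqP; split=> p.
Qed.

Lemma rectangles_setI_closed : setI_closed rectangles.
Proof.
move=> _ _ [B1 [D1 [B1' [mB1 mD1 mB1' ->]]]] [B2 [D2 [B2' [mB2 mD2 mB2' ->]]]].
exists (fun k => B1 k `&` B2 k), (D1 `&` D2), (B1' `&` B2').
split; [by move=> k; exact: measurableI|exact: measurableI|exact: measurableI|].
apply/seteqP; split=> p /=.
  move=> [[B1p [D1p B1'p]] [B2p [D2p B2'p]]].
  by split; [move=> k; split|do !split].
move=> [Bp [[D1p D2p] [B1'p B2'p]]].
by split; (split; [move=> k; have [] := Bp k|by []]).
Qed.

Lemma g_sigma_rectangles_sample_seed (F : set (('I_n -> Z) * Xi)) :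
  <<s @sample_seed_cylinders n _ _ Z Xi >> F ->
  <<s rectangles >> [set p : S | F p.1].
Proof.
move=> cylF.
apply: (preimage_g_sigma (g := fst) (smallest_sigma_algebra _ _) _ cylF).
move=> _ [[k [B [mB ->]]]|[D [mD ->]]]; apply: sub_sigma_algebra.
  exists (fun j => if j == k then B else setT), setT, setT.
  split => //; first by move=> j; case: eqP.
  apply/seteqP; split=> p /=; last by move=> [/(_ k)]; rewrite eqxx.
  by move=> Bp; split => // j; case: eqP => // ->.
exists (fun=> setT), D, setT; split => //.
by apply/seteqP; split=> p /=; [|case=> _ []].
Qed.

Hypothesis loss_measurable :
  measurable [set p : (Wt * Z)%type | loss01 f p.1 p.2].
Hypothesis A_measurable : algo_measurable A.

Definition loss_event : set S := [set p | loss01 f (A p.1.1 p.1.2) p.2].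

Lemma g_sigma_rectangles_loss_event : <<s rectangles >> loss_event.
Proof.
pose g (p : S) : (Wt * Z)%type := (A p.1.1 p.1.2, p.2).
apply: (preimage_g_sigma (g := g) (smallest_sigma_algebra _ _) _ loss_measurable).
move=> _ [[M mM <-]|[B mB <-]].
  by rewrite setTI; exact: g_sigma_rectangles_sample_seed (A_measurable mM).
apply: sub_sigma_algebra; rewrite setTI.
exists (fun=> setT), setT, B; split => //.
by apply/seteqP; split=> p /=; [|case=> _ []].
Qed.

Hypothesis W_def : forall w, W w = A (fun k => Zt k (U k w) w) (xi w).

Lemma measurable_loss_at (g : Omega -> Z) : measurable_fun setT g ->
  measurable [set w | loss01 f (W w) (g w)].
Proof.
move=> mg; have mWg : measurable_fun setT (fun w => (W w, g w)).
  by apply: measurable_fun_pair => //; exact: measurable_funP.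
by have := mWg measurableT _ loss_measurable; rewrite setTI.
Qed.

Definition fresh_event (E : set S) : set (Omega * Z) :=
  [set wz | E (sample_seed wz.1, wz.2)].

Let unconstrained : 'I_n -> set Z := fun=> setT.

Lemma fresh_event_rectangle (B : 'I_n -> set Z) (D : set Xi) (B' : set Z) :
  fresh_event (rectangle B D B') = train_test_event B unconstrained D `*` B'.
Proof.
apply/seteqP; split=> -[w z] /=.
  by move=> [Bw [Dw B'z]]; split=> //; split=> // k; split.
by move=> [[BBw Dw] B'z]; split=> // k; have [] := BBw k.
Qed.

Definition expected_test_loss : \bar R :=
  (\int[P]_w (\int[mu]_z ((loss01 f (W w) z)%:R : R)%:E))%E.

Lemma fresh_loss_event :
  (P \x mu)%E (fresh_event loss_event) = expected_test_loss.
Proof.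
apply: eq_integral => w _ /=.
set Lw := [set z | loss01 f (W w) z].
have mLw : measurable Lw.
  have := measurable_xsection (W w) loss_measurable.
  by congr measurable; apply/seteqP; split=> z; rewrite /xsection /= in_setE.
have -> : xsection (fresh_event loss_event) w = Lw.
  by apply/seteqP; split=> z; rewrite /xsection /Lw /= in_setE W_def.
rewrite -(setIT Lw) -integral_indic //; apply: eq_integral => z _.
rewrite indicE; case Lwz: (loss01 f (W w) z); first by rewrite mem_set.
by rewrite memNset // /Lw /= Lwz.
Qed.

Variable i : 'I_n.

Definition test_event (E : set S) : set Omega :=
  [set w | E (sample_seed w, Zt i false w)].

(* On [U i], the unused point [Zt i false] is a fresh draw from [mu],
   independent of the training sample and of the seed. *)
Definition decoupled : set (set S) :=
  [set E | [/\ measurable (test_event E), measurable (fresh_event E) &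
    P (test_event E `&` [set w | U i w])
    = ((2^-1)%:E * (P \x mu)%E (fresh_event E))%E]].

Let measurable_selected : measurable [set w | U i w].
Proof. exact: (measurable_funPTI (U i) (Y := [set true])). Qed.

Lemma prob_selected : P [set w | U i w] = (2^-1)%:E.
Proof.
have := @prob_train_test_event_selected unconstrained unconstrained setT
  (fun=> measurableT) (fun=> measurableT) measurableT i.
rewrite /train_test_weight big1 ?mul1r; last first.
  by move=> k _; rewrite probability_setT mulr1.
rewrite preimage_setT probability_setT mulr1 => <-.
by congr (P _); apply/seteqP; split=> w //= [].
Qed.

Definition test_constraint (B' : set Z) (k : 'I_n) : set Z :=
  if k == i then B' else setT.

Lemma test_event_rectangle (B : 'I_n -> set Z) (D : set Xi) (B' : set Z) :
  test_event (rectangle B D B') =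
  train_test_event B unconstrained D `&` [set w | B' (Zt i false w)].
Proof.
apply/seteqP; split=> w /=.
  by move=> [Bw [Dw B'w]]; split=> //; split=> // k; split.
by move=> [[BBw Dw] B'w]; split=> // k; have [] := BBw k.
Qed.

Lemma test_event_rectangle_selected (B : 'I_n -> set Z) (D : set Xi)
    (B' : set Z) :
  test_event (rectangle B D B') `&` [set w | U i w] =
  train_test_event B (test_constraint B') D `&` [set w | U i w].
Proof.
apply/seteqP; split=> w /=.
  move=> [[Bw [Dw B'w]] Uw]; split=> //; split=> // k; split=> //.
  by rewrite /test_constraint; case: eqP => // ->; rewrite Uw.
move=> [[BBw Dw] Uw]; do !split => //; first by move=> k; have [] := BBw k.
by have [_] := BBw i; rewrite /test_constraint eqxx Uw.
Qed.

Lemma train_test_weight_test_constraint (B : 'I_n -> set Z) (D : set Xi)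
    (B' : set Z) :
  train_test_weight B (test_constraint B') D =
  train_test_weight B unconstrained D * fine (mu B').
Proof.
rewrite /train_test_weight (bigD1 i) //= [in RHS](bigD1 i) //=.
rewrite /test_constraint eqxx; under eq_bigr => k /negPf -> do rewrite /=.
by rewrite !probability_setT /=; ring.
Qed.

Lemma rectangles_decoupled : rectangles `<=` decoupled.
Proof.
move=> _ [B [D [B' [mB mD mB' ->]]]].
have mtest k : measurable (test_constraint B' k).
  by rewrite /test_constraint; case: eqP.
have mfree k : measurable (unconstrained k) by exact: measurableT.
split.
- rewrite test_event_rectangle; apply: measurableI.
    exact: measurable_train_test_event.
  exact: measurable_funPTI.
- rewrite fresh_event_rectangle; apply: measurableX => //.
  exact: measurable_train_test_event.
- rewrite test_event_rectangle_selected prob_train_test_event_selected //.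
  rewrite train_test_weight_test_constraint fresh_event_rectangle.
  rewrite product_measure1E //; last exact: measurable_train_test_event.
  rewrite EFinM [(_ * fine (mu B'))%:E]EFinM -(prob_train_test_event mB mfree mD).
  by rewrite fineK ?fin_num_measure.
Qed.

Lemma decoupled_setC : setC_closed decoupled.
Proof.
move=> E [mtest mfresh PE]; split; [exact: measurableC|exact: measurableC|].
have -> : test_event (~` E) `&` [set w | U i w] =
    [set w | U i w] `\` test_event E.
  by rewrite setIC.
have fresh_setC :
    (P \x mu)%E (fresh_event (~` E)) = (1 - (P \x mu)%E (fresh_event E))%E.
  exact: probability_setC.
have fresh_fin : (P \x mu)%E (fresh_event E) \is a fin_num.
  by rewrite ge0_fin_numE // (le_lt_trans (probability_le1 _ mfresh)) ?ltry.
rewrite probability_setD // setIC PE prob_selected fresh_setC.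
move: fresh_fin; case: ((P \x mu)%E _) => [r||] // _.
by rewrite -EFinM -EFinB -EFinM; congr EFin; ring.
Qed.

Lemma decoupled_bigcup : trivIset_closed decoupled.
Proof.
move=> F tF decF.
have mtest k : measurable (test_event (F k)) by have [] := decF k.
have mfresh k : measurable (fresh_event (F k)) by have [] := decF k.
have testU : test_event (\bigcup_k F k) = \bigcup_k test_event (F k) by [].
have freshU : fresh_event (\bigcup_k F k) = \bigcup_k fresh_event (F k) by [].
split; rewrite ?testU ?freshU.
- by apply: bigcup_measurable => k _.
- by apply: bigcup_measurable => k _.
- rewrite setI_bigcupl !measure_bigcup //.
  + rewrite -nneseriesZl //; apply: eq_eseriesr => k _; by have [] := decF k.
  + move=> k l _ _ [[w z] [Fkw Flw]]; apply: (tF k l) => //.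
    by exists (sample_seed w, z).
  + by move=> k _; exact: measurableI.
  + move=> k l _ _ [w [[Fkw _] [Flw _]]]; apply: (tF k l) => //.
    by exists (sample_seed w, Zt i false w).
Qed.

Lemma g_sigma_rectangles_decoupled : <<s rectangles >> `<=` decoupled.
Proof.
rewrite -setI_closed_g_dynkin_g_sigma_algebra; last exact: rectangles_setI_closed.
apply: smallest_sub; last exact: rectangles_decoupled.
split; [exact: rectangles_decoupled rectangles_setT|exact: decoupled_setC|].
exact: decoupled_bigcup.
Qed.

Hypothesis interpolating :
  forall k, P [set w | loss01 f (W w) (Zt k (U k w) w)] = 0%E.

Lemma mutual_info_test_loss_le_binary_entropy :
  mutual_info_bool P (fun w => loss01 f (W w) (Zt i false w)) (U i)
  <= binary_entropy (fine expected_test_loss / 2).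
Proof.
have [mtest mfresh] := g_sigma_rectangles_decoupled g_sigma_rectangles_loss_event.
have testE : test_event loss_event = [set w | loss01 f (W w) (Zt i false w)].
  by apply/seteqP; split=> w; rewrite /test_event /= W_def.
rewrite testE fresh_loss_event => Ptest.
have loss_fin : expected_test_loss \is a fin_num.
  rewrite -fresh_loss_event ge0_fin_numE //.
  by rewrite (le_lt_trans (probability_le1 _ mfresh)) ?ltry.
apply: mutual_info_bool_le_binary_entropy.
- exact/measurable_loss_at/measurable_funP.
- exact: measurable_selected.
- exact: prob_selected.
- by rewrite Ptest -(fineK loss_fin) -EFinM mulrC.
- have mtrain := measurable_loss_at (measurable_fun_selected_sample i).
  apply: (subset_measure0 _ mtrain _ (interpolating i)).
  + apply: measurableI; first exact/measurable_loss_at/measurable_funP.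
    exact: measurableC.
  + by move=> w [Lw /negP/negbTE Uw]; rewrite /= Uw.
Qed.

End supersample.

Unset Implicit Arguments.

Theorem theorem7
  (R : realType)
  (* underlying probability space carrying all the randomness *)
  (dO : measure_display) (Omega : measurableType dO) (P : probability Omega R)
  (* Z = X x Y, hypothesis space W, seed space Xi of the randomized algorithm *)
  (dX dY dW dXi : measure_display)
  (X : measurableType dX) (Y : measurableType dY)
  (Wt : measurableType dW) (Xi : measurableType dXi)
  (mu : probability (X * Y)%type R)
  (f : Wt -> X -> Y)
  (hloss : measurable [set p : (Wt * (X * Y))%type | loss01 f p.1 p.2])
  (n : nat) (n_gt0 : (0 < n)%N)
  (* randomized learning algorithm: W = A(training sample, independent seed) *)
  (A : ('I_n -> (X * Y)%type) -> Xi -> Wt)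
  (hA : algo_measurable A)
  (* supersample, selection variables, seed and output hypothesis *)
  (Zt : 'I_n -> bool -> {RV P >-> (X * Y)%type})
  (U : 'I_n -> {RV P >-> bool})
  (xi : {RV P >-> Xi})
  (W : {RV P >-> Wt})
  (* the Zt i j are i.i.d. with law mu, the U i are i.i.d. uniform on {0,1},
     and all of these are mutually independent and independent of the seed *)
  (hlaw : forall (B : 'I_n -> bool -> set (X * Y)%type) (C : 'I_n -> set bool)
            (D : set Xi),
      (forall i j, measurable (B i j)) -> (forall i, measurable (C i)) ->
      measurable D ->
      P [set w | (forall i j, B i j (Zt i j w)) /\ (forall i, C i (U i w))
                 /\ D (xi w)]
      = ((\prod_(i < n) \prod_(j : bool) mu (B i j))
         * (\prod_(i < n) unif_bool R (C i)) * P (xi @^-1` D))%E)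
  (hW : forall w, W w = A (fun i => Zt i (U i w) w) (xi w))
  (* interpolation: zero training loss almost surely at every index *)
  (hinterp : forall i : 'I_n,
      P [set w | loss01 f (W w) (Zt i (U i w) w)] = 0%E) :
  let Lmu : R :=
    fine (\int[P]_w (\int[mu]_z ((loss01 f (W w) z)%:R : R)%:E))%E in
  n%:R^-1 * \sum_(i < n)
      mutual_info_bool P (fun w => loss01 f (W w) (Zt i false w)) (U i)
  <= binary_entropy (Lmu / 2).
Proof.
cbv zeta.
have index_bound i :=
  mutual_info_test_loss_le_binary_entropy hlaw hloss hA hW i hinterp.
apply: le_trans (ler_wpM2l _ (ler_sum _ (fun i _ => index_bound i))) _.
  by rewrite invr_ge0.
by rewrite sumr_const card_ord -[X in _ * X]mulr_natl mulKf // pnatr_eq0 -lt0n.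
Qed.
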